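(* Let $0<R<1$ and let $f$ be a circular tractrix with parameter $R$ and constants $c_1^2-c_2^2=1$. Then $f'(t)=0$ if and only if $t\in\frac{\pi}{\lambda}\mathbb Z$. Moreover, for every $n\in\mathbb Z$ the length of the arc $f|_{[n\pi/\lambda,(n+1)\pi/\lambda]}$ between two consecutive singular points equals $$\operatorname{sign}(c_1)\,\ln\left|\frac{c_1+R}{c_1-R}\right|,$$ which is finite and positive.
   Context: Fix $0<R<1$, $\lambda=\frac{\sqrt{1-R^2}}{R}$, and real constants $c_1,c_2$ with $c_1^2-c_2^2=1$. The circular tractrix is $f(t)=\big(\xi_1\cos\tfrac tR+\xi_2\sin\tfrac tR,\ -\xi_2\cos\tfrac tR+\xi_1\sin\tfrac tR,\ \xi_3\big)$, $t\in\mathbb R$, with $\xi_1=\frac{(R-\frac1R)\cos\lambda t}{\frac{c_1}{R}+\cos\lambda t}$, $\xi_2=-\frac{\lambda\sin\lambda t}{\frac{c_1}{R}+\cos\lambda t}$, $\xi_3=\frac{\lambda c_2}{\frac{c_1}{R}+\cos\lambda t}$. *)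

From Stdlib Require Import Reals.
From Coquelicot Require Import Coquelicot.
Open Scope R_scope.

Definition lam (Rr : R) : R := sqrt (1 - Rr ^ 2) / Rr.

Definition xi1 (Rr c1 : R) (t : R) : R :=
  (Rr - 1 / Rr) * cos (lam Rr * t) / (c1 / Rr + cos (lam Rr * t)).
Definition xi2 (Rr c1 : R) (t : R) : R :=
  - (lam Rr * sin (lam Rr * t)) / (c1 / Rr + cos (lam Rr * t)).
Definition xi3 (Rr c1 c2 : R) (t : R) : R :=
  lam Rr * c2 / (c1 / Rr + cos (lam Rr * t)).

Definition tr1 (Rr c1 c2 : R) (t : R) : R :=
  xi1 Rr c1 t * cos (t / Rr) + xi2 Rr c1 t * sin (t / Rr).
Definition tr2 (Rr c1 c2 : R) (t : R) : R :=
  - xi2 Rr c1 t * cos (t / Rr) + xi1 Rr c1 t * sin (t / Rr).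
Definition tr3 (Rr c1 c2 : R) (t : R) : R := xi3 Rr c1 c2 t.

Definition speed (Rr c1 c2 : R) (t : R) : R :=
  sqrt (Derive (tr1 Rr c1 c2) t ^ 2 + Derive (tr2 Rr c1 c2) t ^ 2
        + Derive (tr3 Rr c1 c2) t ^ 2).

Definition arc_length (Rr c1 c2 a b : R) : R := RInt (speed Rr c1 c2) a b.

Definition sgn (x : R) : R := if Rlt_dec 0 x then 1 else if Rlt_dec x 0 then -1 else 0.

From Stdlib Require Import Reals ZArith Lra.
From Coquelicot Require Import Coquelicot.
Open Scope R_scope.

(* In the frame rotating by the angle t/R, f' has components
   (xi1' + xi2/R, xi1/R - xi2', xi3'); using lambda^2 = (1 - R^2)/R^2 and
   c1^2 - c2^2 = 1 their squared norm collapses to (lambda sin(lambda t) / D(t))^2 with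
   D(t) = c1/R + cos(lambda t), and D never vanishes because |c1| >= 1 > R. So f'
   vanishes exactly where sin(lambda t) does, and on [n pi/lambda, (n+1) pi/lambda] the
   speed is +- lambda sin(lambda t) / D(t), whose primitive -+ ln |D(t)| gives the arc
   length sgn(c1) ln((c1 + R)/(c1 - R)). *)

Lemma is_derive_mul_cos_div (x : R -> R) (r t dx : R) : is_derive x t dx ->
  is_derive (fun s => x s * cos (s / r)) t (dx * cos (t / r) - x t * sin (t / r) / r).
Proof.
intros Hx. evar_last.
- apply (is_derive_mult x (fun s => cos (s / r)));
    [exact Hx | auto_derive; reflexivity | apply Rmult_comm].
- simpl. unfold plus, mult; simpl. unfold Rdiv. ring.
Qed.

Lemma is_derive_mul_sin_div (x : R -> R) (r t dx : R) : is_derive x t dx ->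
  is_derive (fun s => x s * sin (s / r)) t (dx * sin (t / r) + x t * cos (t / r) / r).
Proof.
intros Hx. evar_last.
- apply (is_derive_mult x (fun s => sin (s / r)));
    [exact Hx | auto_derive; reflexivity | apply Rmult_comm].
- simpl. unfold plus, mult; simpl. unfold Rdiv. ring.
Qed.

Lemma is_derive_rot_fst (x y : R -> R) (r t dx dy : R) :
  is_derive x t dx -> is_derive y t dy ->
  is_derive (fun s => x s * cos (s / r) + y s * sin (s / r)) t
    ((dx + y t / r) * cos (t / r) - (x t / r - dy) * sin (t / r)).
Proof.
intros Hx Hy. evar_last.
- apply (is_derive_plus (fun s => x s * cos (s / r)) (fun s => y s * sin (s / r)));
    [apply is_derive_mul_cos_div | apply is_derive_mul_sin_div]; eassumption.
- unfold plus; simpl. unfold Rdiv. ring.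
Qed.

Lemma is_derive_rot_snd (x y : R -> R) (r t dx dy : R) :
  is_derive x t dx -> is_derive y t dy ->
  is_derive (fun s => - y s * cos (s / r) + x s * sin (s / r)) t
    ((x t / r - dy) * cos (t / r) + (dx + y t / r) * sin (t / r)).
Proof.
intros Hx Hy. evar_last.
- apply (is_derive_plus (fun s => - y s * cos (s / r)) (fun s => x s * sin (s / r)));
    [apply (is_derive_mul_cos_div (fun s => - y s)), (is_derive_opp y)
    | apply is_derive_mul_sin_div]; eassumption.
- unfold plus, opp; simpl. unfold Rdiv. ring.
Qed.

Lemma sgn_cases (x : R) : x <> 0 -> (sgn x = 1 /\ 0 < x) \/ (sgn x = -1 /\ x < 0).
Proof.
intros Hx. unfold sgn.
destruct (Rlt_dec 0 x); [left; split; auto|].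
destruct (Rlt_dec x 0); [right; split; auto | lra].
Qed.

Lemma sgn_neq0 (x : R) : x <> 0 -> sgn x <> 0.
Proof. intros Hx. destruct (sgn_cases x Hx) as [[-> _] | [-> _]]; lra. Qed.

Lemma sgn_mul_self (x : R) : x <> 0 -> sgn x * sgn x = 1.
Proof. intros Hx. destruct (sgn_cases x Hx) as [[-> _] | [-> _]]; ring. Qed.

Lemma sgn_mul_add_gt0 (x r s : R) :
  0 < r -> r < Rabs x -> -1 <= s <= 1 -> 0 < sgn x * (x / r + s).
Proof.
intros Hr Hx Hs.
assert (Hxr : x / r * r = x) by (field; lra).
assert (x <> 0) by (intros ->; rewrite Rabs_R0 in Hx; lra).
destruct (sgn_cases x) as [[-> Hpos] | [-> Hneg]]; auto.
- rewrite Rabs_pos_eq in Hx by lra. nra.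
- rewrite Rabs_left in Hx by lra. nra.
Qed.

Lemma ratio_gt0_sgn_mul_ln_gt0 (x r : R) :
  0 < r -> r < Rabs x -> 0 < (x + r) / (x - r) /\ 0 < sgn x * ln ((x + r) / (x - r)).
Proof.
intros Hr Hx.
assert (x <> 0) by (intros ->; rewrite Rabs_R0 in Hx; lra).
set (q := (x + r) / (x - r)).
destruct (sgn_cases x) as [[-> Hpos] | [-> Hneg]]; auto.
- rewrite Rabs_pos_eq in Hx by lra.
  assert (Hq : q * (x - r) = x + r) by (unfold q; field; lra).
  assert (H1 : 1 < q) by nra.
  pose proof (ln_increasing 1 q Rlt_0_1 H1). rewrite ln_1 in *. split; lra.
- rewrite Rabs_left in Hx by lra.
  assert (Hq : q * (x - r) = x + r) by (unfold q; field; lra).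
  assert (H0 : 0 < q) by nra.
  assert (H1 : q < 1) by nra.
  pose proof (ln_increasing q 1 H0 H1). rewrite ln_1 in *. split; lra.
Qed.

Lemma cos_IZR_mul_PI (n : Z) : cos (IZR n * PI) = 1 \/ cos (IZR n * PI) = -1.
Proof.
pose proof (sin2_cos2 (IZR n * PI)) as Hsc.
rewrite (sin_eq_0_1 (IZR n * PI)) in Hsc by (exists n; reflexivity).
unfold Rsqr in Hsc. nra.
Qed.

Section CircularTractrix.

Variables Rr c1 c2 : R.
Hypotheses (HR0 : 0 < Rr) (HR1 : Rr < 1) (Hc : c1 ^ 2 - c2 ^ 2 = 1).

Lemma lam_gt0 : 0 < lam Rr.
Proof. unfold lam. apply Rdiv_lt_0_compat; [apply sqrt_lt_R0; nra | exact HR0]. Qed.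

Lemma lam_sqr : lam Rr ^ 2 = (1 - Rr ^ 2) / Rr ^ 2.
Proof.
unfold lam, Rdiv. rewrite Rpow_mult_distr, pow2_sqrt, pow_inv by nra. reflexivity.
Qed.

Lemma Rr_lt_abs_c1 : Rr < Rabs c1.
Proof.
assert (H1 : 1 <= Rabs c1 ^ 2) by (rewrite pow2_abs; nra).
pose proof (Rabs_pos c1). nra.
Qed.

Definition den (t : R) : R := c1 / Rr + cos (lam Rr * t).

Lemma sgn_mul_den_gt0 (t : R) : 0 < sgn c1 * den t.
Proof. apply sgn_mul_add_gt0; [exact HR0 | exact Rr_lt_abs_c1 | apply COS_bound]. Qed.

Lemma den_neq0 (t : R) : den t <> 0.
Proof. intros H. pose proof (sgn_mul_den_gt0 t) as Hg. rewrite H, Rmult_0_r in Hg. lra. Qed.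

(* The form in which [field] asks for [den_neq0]. *)
Lemma den_mul_Rr_neq0 (t : R) : c1 + cos (lam Rr * t) * Rr <> 0.
Proof.
replace (c1 + cos (lam Rr * t) * Rr) with (den t * Rr) by (unfold den; field; lra).
apply Rmult_integral_contrapositive_currified; [apply den_neq0 | lra].
Qed.

Lemma c1_neq0 : c1 <> 0.
Proof. intros H. pose proof Rr_lt_abs_c1. rewrite H, Rabs_R0 in *. lra. Qed.

Definition dxi1 (t : R) : R :=
  - (Rr - 1 / Rr) * lam Rr * sin (lam Rr * t) * (c1 / Rr) / den t ^ 2.
Definition dxi2 (t : R) : R :=
  - lam Rr ^ 2 * (cos (lam Rr * t) * den t + sin (lam Rr * t) ^ 2) / den t ^ 2.
Definition dxi3 (t : R) : R := lam Rr ^ 2 * c2 * sin (lam Rr * t) / den t ^ 2.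

Lemma is_derive_xi1 (t : R) : is_derive (xi1 Rr c1) t (dxi1 t).
Proof.
pose proof (den_neq0 t). unfold xi1, dxi1, den in *.
auto_derive; [exact H | field; split; [lra | apply den_mul_Rr_neq0]].
Qed.

Lemma is_derive_xi2 (t : R) : is_derive (xi2 Rr c1) t (dxi2 t).
Proof.
pose proof (den_neq0 t). unfold xi2, dxi2, den in *.
auto_derive; [exact H | field; split; [lra | apply den_mul_Rr_neq0]].
Qed.

Lemma is_derive_tr3 (t : R) : is_derive (tr3 Rr c1 c2) t (dxi3 t).
Proof.
pose proof (den_neq0 t). unfold tr3, xi3, dxi3, den in *.
auto_derive; [exact H | field; split; [lra | apply den_mul_Rr_neq0]].
Qed.

(* Components of f' in the frame rotating by the angle t / Rr. *)
Definition vel1 (t : R) : R := dxi1 t + xi2 Rr c1 t / Rr.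
Definition vel2 (t : R) : R := xi1 Rr c1 t / Rr - dxi2 t.

Lemma Rr_sub_inv_lam : Rr - 1 / Rr = - Rr * lam Rr ^ 2.
Proof. rewrite lam_sqr. field. lra. Qed.

Lemma vel1_eq (t : R) :
  vel1 t = - lam Rr * sin (lam Rr * t) * (c1 + cos (lam Rr * t) / Rr) / den t ^ 2.
Proof.
pose proof (den_mul_Rr_neq0 t).
unfold vel1, dxi1, xi2, den. rewrite Rr_sub_inv_lam, lam_sqr.
field. split; lra.
Qed.

Lemma vel2_eq (t : R) : vel2 t = (lam Rr * sin (lam Rr * t)) ^ 2 / den t ^ 2.
Proof.
pose proof (den_mul_Rr_neq0 t).
unfold vel2, dxi2, xi1, den. rewrite Rr_sub_inv_lam.
field. split; lra.
Qed.

Lemma vel_sqr (t : R) :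
  vel1 t ^ 2 + vel2 t ^ 2 + dxi3 t ^ 2 = (lam Rr * sin (lam Rr * t) / den t) ^ 2.
Proof.
pose proof (den_neq0 t) as HD.
rewrite vel1_eq, vel2_eq. unfold dxi3.
set (x := cos (lam Rr * t)). set (y := sin (lam Rr * t)).
assert (Hden : (c1 + x / Rr) ^ 2 + lam Rr ^ 2 * (y ^ 2 + c2 ^ 2) = den t ^ 2).
{ assert (Hxy : y ^ 2 = 1 - x ^ 2)
    by (pose proof (sin2_cos2 (lam Rr * t)) as Hsc; unfold Rsqr in Hsc; fold x y in Hsc; nra).
  rewrite lam_sqr, Hxy. unfold den. fold x.
  replace (c2 ^ 2) with (c1 ^ 2 - 1) by lra. field. lra. }
transitivity ((lam Rr * y / den t) ^ 2 / den t ^ 2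
              * ((c1 + x / Rr) ^ 2 + lam Rr ^ 2 * (y ^ 2 + c2 ^ 2))).
- field. split; [lra | exact HD].
- rewrite Hden. field. exact HD.
Qed.

Lemma is_derive_tr1 (t : R) :
  is_derive (tr1 Rr c1 c2) t (vel1 t * cos (t / Rr) - vel2 t * sin (t / Rr)).
Proof. exact (is_derive_rot_fst _ _ _ _ _ _ (is_derive_xi1 t) (is_derive_xi2 t)). Qed.

Lemma is_derive_tr2 (t : R) :
  is_derive (tr2 Rr c1 c2) t (vel2 t * cos (t / Rr) + vel1 t * sin (t / Rr)).
Proof. exact (is_derive_rot_snd _ _ _ _ _ _ (is_derive_xi1 t) (is_derive_xi2 t)). Qed.

Lemma speed_eq (t : R) : speed Rr c1 c2 t = Rabs (lam Rr * sin (lam Rr * t) / den t).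
Proof.
unfold speed.
rewrite (is_derive_unique _ _ _ (is_derive_tr1 t)), (is_derive_unique _ _ _ (is_derive_tr2 t)),
  (is_derive_unique _ _ _ (is_derive_tr3 t)).
replace ((vel1 t * cos (t / Rr) - vel2 t * sin (t / Rr)) ^ 2
         + (vel2 t * cos (t / Rr) + vel1 t * sin (t / Rr)) ^ 2)
  with ((vel1 t ^ 2 + vel2 t ^ 2) * (sin (t / Rr) ^ 2 + cos (t / Rr) ^ 2)) by ring.
assert (Hsc : sin (t / Rr) ^ 2 + cos (t / Rr) ^ 2 = 1)
  by (rewrite <- (sin2_cos2 (t / Rr)); unfold Rsqr; ring).
rewrite Hsc, Rmult_1_r, vel_sqr, <- pow2_abs. apply sqrt_pow2, Rabs_pos.
Qed.

Lemma Derive_tr_eq0_iff (t : R) :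
  (Derive (tr1 Rr c1 c2) t = 0 /\ Derive (tr2 Rr c1 c2) t = 0 /\ Derive (tr3 Rr c1 c2) t = 0)
  <-> sin (lam Rr * t) = 0.
Proof.
pose proof (den_neq0 t) as HD. pose proof lam_gt0 as HL.
split.
- intros [H1 [H2 H3]].
  assert (Hv : lam Rr * sin (lam Rr * t) / den t = 0).
  { apply Rabs_eq_0. rewrite <- speed_eq. unfold speed. rewrite H1, H2, H3.
    replace (0 ^ 2 + 0 ^ 2 + 0 ^ 2) with 0 by ring. apply sqrt_0. }
  replace (sin (lam Rr * t)) with (lam Rr * sin (lam Rr * t) / den t * den t / lam Rr)
    by (field; split; lra).
  rewrite Hv. unfold Rdiv. ring.
- intros Hs.
  rewrite (is_derive_unique _ _ _ (is_derive_tr1 t)), (is_derive_unique _ _ _ (is_derive_tr2 t)),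
    (is_derive_unique _ _ _ (is_derive_tr3 t)), vel1_eq, vel2_eq.
  unfold dxi3. rewrite Hs. unfold Rdiv. repeat split; ring.
Qed.

Lemma sin_lam_eq0_iff (t : R) : sin (lam Rr * t) = 0 <-> exists n : Z, t = IZR n * PI / lam Rr.
Proof.
pose proof lam_gt0 as HL.
split.
- intros Hs. destruct (sin_eq_0_0 _ Hs) as [n Hn]. exists n. rewrite <- Hn. field. lra.
- intros [n ->]. apply sin_eq_0_1. exists n. field. lra.
Qed.

Lemma speed_on_arc (n : Z) (t : R) :
  IZR n * PI <= lam Rr * t <= IZR n * PI + PI ->
  speed Rr c1 c2 t = cos (IZR n * PI) * sgn c1 * (lam Rr * sin (lam Rr * t) / den t).
Proof.
intros [Ht1 Ht2].
pose proof (den_neq0 t) as HD. pose proof (sgn_mul_den_gt0 t) as HgD. pose proof lam_gt0 as HL.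
pose proof c1_neq0 as Hc1.
pose proof (sgn_mul_self c1 Hc1) as Hg.
assert (He : cos (IZR n * PI) * cos (IZR n * PI) = 1)
  by (destruct (cos_IZR_mul_PI n) as [-> | ->]; ring).
rewrite speed_eq.
set (e := cos (IZR n * PI)) in *. set (g := sgn c1) in *.
set (v := lam Rr * sin (lam Rr * t) / den t).
assert (Hsin : 0 <= e * sin (lam Rr * t)).
{ replace (lam Rr * t) with ((lam Rr * t - IZR n * PI) + IZR n * PI) by ring.
  rewrite sin_plus, (sin_eq_0_1 (IZR n * PI)) by (exists n; reflexivity). fold e.
  replace (e * (sin (lam Rr * t - IZR n * PI) * e + cos (lam Rr * t - IZR n * PI) * 0))
    with (e * e * sin (lam Rr * t - IZR n * PI)) by ring.
  rewrite He, Rmult_1_l. apply sin_ge_0; lra. }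
assert (Hv : e * g * v = lam Rr * (e * sin (lam Rr * t)) * (g * g) / (g * den t))
  by (unfold v; field; split; [assumption | apply sgn_neq0, Hc1]).
rewrite Hg in Hv.
rewrite <- (Rabs_pos_eq (e * g * v)).
- apply Rsqr_eq_abs_0. unfold Rsqr.
  replace (e * g * v * (e * g * v)) with ((e * e) * (g * g) * (v * v)) by ring.
  rewrite He, Hg. ring.
- rewrite Hv. apply Rmult_le_pos; [nra | left; apply Rinv_0_lt_compat; exact HgD].
Qed.

Lemma is_derive_ln_den (t : R) :
  is_derive (fun s => ln (sgn c1 * den s)) t (- lam Rr * sin (lam Rr * t) / den t).
Proof.
pose proof (sgn_mul_den_gt0 t) as HgD. pose proof (den_mul_Rr_neq0 t).
pose proof (sgn_neq0 c1 c1_neq0).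
unfold den in *. auto_derive; [exact HgD | field; repeat split; lra].
Qed.

Lemma ln_den_ratio :
  ln (sgn c1 * (c1 / Rr + 1)) - ln (sgn c1 * (c1 / Rr + -1)) = ln ((c1 + Rr) / (c1 - Rr)).
Proof.
assert (Hp : 0 < sgn c1 * (c1 / Rr + 1))
  by (apply sgn_mul_add_gt0; [lra | apply Rr_lt_abs_c1 | lra]).
assert (Hm : 0 < sgn c1 * (c1 / Rr + -1))
  by (apply sgn_mul_add_gt0; [lra | apply Rr_lt_abs_c1 | lra]).
rewrite <- ln_div by assumption. f_equal.
assert (c1 - Rr <> 0)
  by (pose proof Rr_lt_abs_c1; intros H0; replace c1 with Rr in * by lra;
      rewrite Rabs_pos_eq in *; lra).
field. repeat split; [assumption | lra | apply sgn_neq0, c1_neq0].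
Qed.

Lemma is_RInt_speed_arc (n : Z) :
  is_RInt (speed Rr c1 c2) (IZR n * PI / lam Rr) ((IZR n + 1) * PI / lam Rr)
    (sgn c1 * ln ((c1 + Rr) / (c1 - Rr))).
Proof.
pose proof lam_gt0 as HL. pose proof PI_RGT_0 as HPI.
set (a := IZR n * PI / lam Rr). set (b := (IZR n + 1) * PI / lam Rr).
assert (HLa : lam Rr * a = IZR n * PI) by (unfold a; field; lra).
assert (HLb : lam Rr * b = IZR n * PI + PI) by (unfold b; field; lra).
assert (Hab : a <= b) by (apply (Rmult_le_reg_l (lam Rr)); lra).
set (e := cos (IZR n * PI)). set (g := sgn c1).
set (F := fun s => - (e * g) * ln (g * den s)).
assert (HF : is_RInt (fun s => e * g * (lam Rr * sin (lam Rr * s) / den s)) a b (F b - F a)).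
{ apply (is_RInt_derive F); intros t _.
  - unfold F. evar_last; [apply is_derive_scal, is_derive_ln_den |].
    pose proof (den_neq0 t). field. lra.
  - apply (@ex_derive_continuous R_AbsRing R_NormedModule).
    pose proof (den_neq0 t) as HD. unfold den in *.
    auto_derive. exact HD. }
assert (Hval : F b - F a = g * ln ((c1 + Rr) / (c1 - Rr))).
{ unfold F, den. rewrite HLa, HLb, neg_cos. fold e. rewrite <- ln_den_ratio. fold g.
  destruct (cos_IZR_mul_PI n) as [He | He]; fold e in He; rewrite He;
    [replace (- (1)) with (-1) by ring | replace (- (-1)) with 1 by ring]; ring. }
rewrite <- Hval.
apply (is_RInt_ext (fun s => e * g * (lam Rr * sin (lam Rr * s) / den s))); [|exact HF].
intros t Ht. rewrite Rmin_left, Rmax_right in Ht by exact Hab.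
symmetry. apply speed_on_arc.
split; [rewrite <- HLa | rewrite <- HLb]; apply Rmult_le_compat_l; lra.
Qed.

End CircularTractrix.

Theorem mainTheorem12 (Rr c1 c2 : R) :
  0 < Rr -> Rr < 1 -> c1 ^ 2 - c2 ^ 2 = 1 ->
  (forall t, ex_derive (tr1 Rr c1 c2) t /\ ex_derive (tr2 Rr c1 c2) t
             /\ ex_derive (tr3 Rr c1 c2) t) /\
  (forall t,
     (Derive (tr1 Rr c1 c2) t = 0 /\ Derive (tr2 Rr c1 c2) t = 0
      /\ Derive (tr3 Rr c1 c2) t = 0)
     <-> exists n : Z, t = IZR n * PI / lam Rr) /\
  (forall n : Z,
     let a := IZR n * PI / lam Rr in
     let b := (IZR n + 1) * PI / lam Rr in
     ex_RInt (speed Rr c1 c2) a b /\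
     arc_length Rr c1 c2 a b = sgn c1 * ln (Rabs ((c1 + Rr) / (c1 - Rr))) /\
     0 < sgn c1 * ln (Rabs ((c1 + Rr) / (c1 - Rr)))).
Proof.
intros HR0 HR1 Hc.
split; [|split].
- intros t. split; [|split]; eexists;
    [apply is_derive_tr1 | apply is_derive_tr2 | apply is_derive_tr3]; assumption.
- intros t. rewrite Derive_tr_eq0_iff, sin_lam_eq0_iff by assumption. reflexivity.
- intros n a b.
  destruct (ratio_gt0_sgn_mul_ln_gt0 c1 Rr HR0 (Rr_lt_abs_c1 Rr c1 c2 HR0 HR1 Hc)) as [Hq Hpos].
  pose proof (is_RInt_speed_arc Rr c1 c2 HR0 HR1 Hc n) as HI.
  rewrite Rabs_pos_eq by lra.
  split; [|split].
  + eexists. exact HI.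
  + apply is_RInt_unique, HI.
  + exact Hpos.
Qed.
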